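(* In the setting of the context, let $(x_0,y_0)\in\mathcal D^+_{\bar y}$, let $T_0=T(x_0,y_0)$ and $T_1=T_0+\dfrac{h(x_0,y_0)-\bar x}{\gamma\bar y}$. Define $\tilde x(t)=h(x_0,y_0)-\gamma(t-T_0)\bar y$ and the control $$u^*(t)=\begin{cases}0 & \text{if } t<T_0 \text{ or } t>T_1,\\ \rho(\tilde x(t),\bar y) & \text{if } T_0\le t\le T_1.\end{cases}$$ Let $(x^*(t),y^*(t))$ be the solution of the controlled CBF-SIR model with initial condition $(x_0,y_0)$ under $u^*$. Then: (i) for $T_0<t<T_1$, $x^*(t)=h(x_0,y_0)-\gamma(t-T_0)\bar y$ and $y^*(t)=\bar y$; (ii) $u^*(t)=\mu(x^*(t),y^*(t))$ for every $t\ge0$, where $\mu(x,y)=0$ if $y<\bar y$ and $\mu(x,\bar y)=[\rho(x,\bar y)]_+$; (iii) $u^*$ is feasible, i.e. $y^*(t)\le\bar y$ for all $t\ge0$; (iv) $J(u^* )=\displaystyle\int_0^{\infty}u^*(t)\,dt=\frac{1}{\gamma\bar y}\int_{\bar x}^{h(x_0,y_0)}\rho(x,\bar y)\,dx.$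
   Context: $\mathcal S=\{(x,y)\in\mathbb R^2_+: x+y\le1\}$, $\gamma>0$, $\beta:\mathcal S\to(0,\infty)$ of class $\mathcal C^2$, $R(x,y)=\frac1\gamma\beta(x,y)x$, and for $x>0$, $\rho(x,y)=\frac{R(x,y)-1}{R(x,y)}=1-\frac{\gamma}{x\beta(x,y)}$; $[a]_+=\max\{a,0\}$. Assumption 1 holds: $x\beta_x+\beta>0$ and $\beta_y\le0$ on $\mathcal S$. Controlled CBF-SIR model: $\dot x=-(1-u(t))\gamma R(x,y)y$, $\dot y=\gamma((1-u(t))R(x,y)-1)y$ (solutions continuous, piecewise-$\mathcal C^1$, in $\mathcal S$); uncontrolled model: $u\equiv0$, with flow $\phi(t,x_0,y_0)$; $\Gamma^+(x_0,y_0)=\{\phi(t,x_0,y_0):t\ge0\}$, $\Gamma^-(x,y)=\{(x_0,y_0)\in\mathcal S:(x,y)\in\Gamma^+(x_0,y_0)\}$. Assume $\beta(1,0)>\gamma$; $\tilde y\in(0,1)$ is the unique number with $R(1-\tilde y,\tilde y)=1$, $\kappa:[0,\tilde y]\to[0,1]$ the $\mathcal C^1$ function with $\{R=1\}\cap\mathcal S=\{(\kappa(y),y):y\in[0,\tilde y]\}$. Fix $\bar y\in(0,\tilde y)$ and $\bar x=\kappa(\bar y)$. There are $\hat y\in[0,\bar y]$ and a $\mathcal C^1$ strictly decreasing $\lambda:[\hat y,\bar y]\to[\bar x,1]$ with $\lambda(\bar y)=\bar x$ and $\overline{\Gamma^-(\bar x,\bar y)}=\{(\lambda(y),y):\hat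 y\le y\le\bar y\}$. $\mathcal D_{\bar y}=\{(x,y)\in\mathcal S:0<y\le\bar y\}$, $\mathcal D^+_{\bar y}=\{(x,y)\in\mathcal D_{\bar y}: y\in[\hat y,\bar y],\ x>\lambda(y)\}$, $\mathcal J=\{(x,\bar y)\in\mathcal S:\bar x<x\le1-\bar y\}$. For $(x,y)\in\mathcal D^+_{\bar y}$, $T(x,y)$ is the (finite) first time $t\ge0$ with $\phi(t,x,y)\in\mathcal J$ and $h(x,y)$ is the first coordinate of $\phi(T(x,y),x,y)$. A control is feasible if the corresponding solution satisfies $y(t)\le\bar y$ for all $t\ge0$. *)

From Stdlib Require Import Reals Lra List.
From Coquelicot Require Import Coquelicot.
Open Scope R_scope.

Definition inS (x y : R) : Prop := 0 <= x /\ 0 <= y /\ x + y <= 1.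

Definition Rrep (gamma : R) (beta : R -> R -> R) (x y : R) : R :=
  / gamma * beta x y * x.

(* rho(x,y) = 1 - gamma / (x beta(x,y))  (used only for x > 0) *)
Definition rho (gamma : R) (beta : R -> R -> R) (x y : R) : R :=
  1 - gamma / (x * beta x y).

Definition posp (a : R) : R := Rmax a 0.

Definition partial_x (f : R -> R -> R) (x y : R) : R := Derive (fun s => f s y) x.
Definition partial_y (f : R -> R -> R) (x y : R) : R := Derive (fun s => f x s) y.

Definition C1_on (U : R * R -> Prop) (f : R -> R -> R) : Prop :=
  forall p : R * R, U p ->
    continuous (fun q : R * R => f (fst q) (snd q)) p /\
    ex_derive (fun s => f s (snd p)) (fst p) /\
    ex_derive (fun s => f (fst p) s) (snd p) /\
    continuous (fun q : R * R => partial_x f (fst q) (snd q)) p /\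
    continuous (fun q : R * R => partial_y f (fst q) (snd q)) p.

Definition C2_on (U : R * R -> Prop) (f : R -> R -> R) : Prop :=
  C1_on U f /\ C1_on U (partial_x f) /\ C1_on U (partial_y f).

(* beta is of class C^2 on S: C^2 on an open neighbourhood of S *)
Definition C2_on_S (f : R -> R -> R) : Prop :=
  exists U : R * R -> Prop, open U /\ (forall x y, inS x y -> U (x, y)) /\ C2_on U f.

Definition assumption1 (beta : R -> R -> R) : Prop :=
  forall x y, inS x y ->
    x * partial_x beta x y + beta x y > 0 /\ partial_y beta x y <= 0.

(* (x,y) : [0,oo) -> S is a solution of the controlled CBF-SIR model with control u
   and initial condition (x0,y0): continuous on [0,oo), piecewise C^1 (the ODE holds
   at every t > 0 outside a finite set of times), with values in S. *)
Definition is_solution (gamma : R) (beta : R -> R -> R) (u : R -> R)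
    (x y : R -> R) (x0 y0 : R) : Prop :=
  x 0 = x0 /\ y 0 = y0 /\
  (forall t, 0 <= t -> inS (x t) (y t)) /\
  filterlim x (at_right 0) (locally x0) /\
  filterlim y (at_right 0) (locally y0) /\
  (forall t, 0 < t -> continuous x t /\ continuous y t) /\
  exists l : list R, forall t, 0 < t -> ~ In t l ->
    is_derive x t (- (1 - u t) * gamma * Rrep gamma beta (x t) (y t) * y t) /\
    is_derive y t (gamma * ((1 - u t) * Rrep gamma beta (x t) (y t) - 1) * y t).

Definition is_flow (gamma : R) (beta : R -> R -> R) (phi : R -> R * R -> R * R) : Prop :=
  forall x y, inS x y ->
    is_solution gamma beta (fun _ => 0)
      (fun t => fst (phi t (x, y))) (fun t => snd (phi t (x, y))) x y.

Definition Gminus (phi : R -> R * R -> R * R) (x y : R) (p : R * R) : Prop :=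
  inS (fst p) (snd p) /\ exists t, 0 <= t /\ phi t p = (x, y).

Definition closure2 (A : R * R -> Prop) (p : R * R) : Prop :=
  forall eps, 0 < eps -> exists q, A q /\
    Rabs (fst q - fst p) < eps /\ Rabs (snd q - snd p) < eps.

Definition inDplus (ybar yhat : R) (lam : R -> R) (x y : R) : Prop :=
  inS x y /\ 0 < y <= ybar /\ yhat <= y <= ybar /\ x > lam y.

Definition inJ (xbar ybar : R) (p : R * R) : Prop :=
  inS (fst p) (snd p) /\ snd p = ybar /\ xbar < fst p <= 1 - ybar.

Definition Tone (gamma xbar ybar T0 h0 : R) : R := T0 + (h0 - xbar) / (gamma * ybar).

Definition xtilde (gamma ybar T0 h0 t : R) : R := h0 - gamma * (t - T0) * ybar.

Definition ustar (gamma : R) (beta : R -> R -> R) (xbar ybar T0 h0 : R) (t : R) : R :=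
  if Rlt_dec t T0 then 0
  else if Rlt_dec (Tone gamma xbar ybar T0 h0) t then 0
  else rho gamma beta (xtilde gamma ybar T0 h0 t) ybar.

(* mu(x,y) = 0 if y < ybar, [rho(x,ybar)]_+ if y = ybar
   (the value for y > ybar is irrelevant: feasibility is asserted separately) *)
Definition mu (gamma : R) (beta : R -> R -> R) (ybar x y : R) : R :=
  if Rlt_dec y ybar then 0 else posp (rho gamma beta x ybar).

From Stdlib Require Import Reals Lra List.
From Coquelicot Require Import Coquelicot.
Open Scope R_scope.

(* Until [T0] the control vanishes, so by uniqueness of solutions (the field is locally
   Lipschitz since [beta] is C^1) the controlled trajectory is the free one.  The free
   trajectory stays strictly below [ybar] before [T0]: at a first contact with the level
   [y = ybar] we would have [x < xbar] ([J] is first reached at [T0], and the corner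
   [(xbar, ybar)] is not reached since its backward orbit is the curve [x = lam y]), and
   there [y' = y (x beta(x, ybar) - gamma) < 0] by Assumption 1.  On [[T0, T1]] the factor
   [1 - u* = gamma / (x beta(x, ybar))] makes the segment [(xtilde t, ybar)] a solution,
   hence the solution.  After [T1] the free trajectory starts at the corner, [x] decreases
   and [y' <= 0] on [{x <= xbar, y >= ybar}], so [y] stays below [ybar].  The cost is the
   integral of [rho] along the segment, i.e. a change of variables [x = xtilde t]. *)

(** * Piecewise differentiable functions *)

Lemma MVT_interior (f : R -> R) a b : a < b ->
  (forall c, a < c < b -> ex_derive f c) ->
  (forall c, a <= c <= b -> continuity_pt f c) ->
  exists c, a < c < b /\ f b - f a = Derive f c * (b - a).
Proof.
  intros Hab Hd Hc.
  assert (pr1 : forall c, a < c < b -> derivable_pt f c)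
    by (intros c Hc'; apply ex_derive_Reals_0, Hd, Hc').
  assert (pr2 : forall c, a < c < b -> derivable_pt id c)
    by (intros c _; apply derivable_pt_id).
  destruct (MVT f id a b pr1 pr2 Hab Hc) as [c [P HP]].
  { intros c _. apply derivable_continuous_pt, derivable_pt_id. }
  exists c; split; auto.
  assert (E : derive_pt id c (pr2 c P) = 1)
    by (apply derive_pt_eq_0, derivable_pt_lim_id).
  rewrite E, Derive_Reals in HP. unfold id in HP. lra.
Qed.

Lemma interval_avoiding_ind (l : list R) (Q : R -> R -> Prop) :
  (forall a b c, a < b < c -> Q a b -> Q b c -> Q a c) ->
  (forall a b, a < b -> (forall t, a < t < b -> ~ In t l) -> Q a b) ->
  forall a b, a < b -> Q a b.
Proof.
  intros Hchain. induction l as [|p l IH]; intros Hbase.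
  - intros a b Hab. apply Hbase; auto.
  - apply IH. intros a b Hab Hl.
    destruct (Rlt_dec a p) as [Hap|Hap]; [destruct (Rlt_dec p b) as [Hpb|Hpb]|].
    + apply Hchain with p; [lra| |]; apply Hbase; try lra;
        intros t Ht [E|E]; solve [lra | exact (Hl t ltac:(lra) E)].
    + apply Hbase; auto. intros t Ht [E|E]; [lra | exact (Hl t Ht E)].
    + apply Hbase; auto. intros t Ht [E|E]; [lra | exact (Hl t Ht E)].
Qed.

Lemma piecewise_MVT_lt (g : R -> R) (K : R) (l : list R) a b : a < b ->
  (forall t, a <= t <= b -> continuity_pt g t) ->
  (forall t, a < t < b -> ~ In t l -> exists d, is_derive g t d /\ d < K) ->
  g b - g a < K * (b - a).
Proof.
  intros Hab Hc Hd.
  enough (H : forall a' b', a' < b' -> a <= a' -> b' <= b -> g b' - g a' < K * (b' - a'))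
    by (apply H; lra).
  apply (interval_avoiding_ind l
    (fun a' b' => a <= a' -> b' <= b -> g b' - g a' < K * (b' - a'))).
  - intros a1 b1 c1 H H1 H2 Ha Hc1. specialize (H1 Ha ltac:(lra)). specialize (H2 ltac:(lra) Hc1).
    lra.
  - intros a' b' Hab' Hl Ha Hb.
    destruct (MVT_interior g a' b') as [c [Hc' E]]; auto.
    + intros c Hc'. destruct (Hd c ltac:(lra) (Hl c Hc')) as [d [D _]]. exists d; exact D.
    + intros c Hc'. apply Hc; lra.
    + destruct (Hd c ltac:(lra) (Hl c Hc')) as [d [D Dk]].
      rewrite E, (is_derive_unique _ _ _ D). apply Rmult_lt_compat_r; lra.
Qed.

Lemma piecewise_MVT_le (g : R -> R) (K : R) (l : list R) a b : a <= b ->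
  (forall t, a <= t <= b -> continuity_pt g t) ->
  (forall t, a < t < b -> ~ In t l -> exists d, is_derive g t d /\ d <= K) ->
  g b - g a <= K * (b - a).
Proof.
  intros Hab Hc Hd. destruct (Req_dec a b) as [<-|Hne]; [lra|].
  apply le_epsilon. intros eps Heps.
  replace (K * (b - a) + eps) with ((K + eps / (b - a)) * (b - a)) by (field; lra).
  left. apply (piecewise_MVT_lt g _ l); auto; try lra.
  intros t Ht Hn. destruct (Hd t Ht Hn) as [d [D Dk]]. exists d; split; [exact D|].
  assert (0 < eps / (b - a)) by (apply Rdiv_lt_0_compat; lra). lra.
Qed.

Lemma piecewise_MVT_abs (g : R -> R) (K : R) (l : list R) a b : a <= b ->
  (forall t, a <= t <= b -> continuity_pt g t) ->
  (forall t, a < t < b -> ~ In t l -> exists d, is_derive g t d /\ Rabs d <= K) ->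
  Rabs (g b - g a) <= K * (b - a).
Proof.
  intros Hab Hc Hd. apply Rabs_le. split.
  - enough (H : (fun t => - g t) b - (fun t => - g t) a <= K * (b - a)) by (simpl in H; lra).
    apply (piecewise_MVT_le (fun t => - g t) K l); auto.
    + intros t Ht. apply continuity_pt_opp, Hc, Ht.
    + intros t Ht Hn. destruct (Hd t Ht Hn) as [d [D Dk]].
      exists (- d); split; [exact (is_derive_opp g t d D)|].
      rewrite <- Rabs_Ropp in Dk. generalize (Rle_abs (- d)); lra.
  - apply (piecewise_MVT_le g K l); auto.
    intros t Ht Hn. destruct (Hd t Ht Hn) as [d [D Dk]].
    exists d; split; [exact D|]. generalize (Rle_abs d); lra.
Qed.

Lemma continuity_pt_ball (f : R -> R) t eps : continuity_pt f t -> 0 < eps ->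
  exists d, 0 < d /\ forall z, Rabs (z - t) < d -> Rabs (f z - f t) < eps.
Proof.
  intros Hc He.
  destruct (proj1 (continuity_pt_locally f t) Hc (mkposreal eps He)) as [d Hd].
  exists d; split; [apply cond_pos|]. intros z Hz; apply (Hd z Hz).
Qed.

Lemma continuity_pt_lt_near (f : R -> R) t c : continuity_pt f t -> f t < c ->
  exists d, 0 < d /\ forall z, Rabs (z - t) < d -> f z < c.
Proof.
  intros Hc Hlt. destruct (continuity_pt_ball f t (c - f t) Hc) as [d [Hd H]]; [lra|].
  exists d; split; auto. intros z Hz. specialize (H z Hz). apply Rabs_lt_between in H. lra.
Qed.

Lemma continuity_pt_gt_near (f : R -> R) t c : continuity_pt f t -> c < f t ->
  exists d, 0 < d /\ forall z, Rabs (z - t) < d -> c < f z.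
Proof.
  intros Hc Hlt. destruct (continuity_pt_ball f t (f t - c) Hc) as [d [Hd H]]; [lra|].
  exists d; split; auto. intros z Hz. specialize (H z Hz). apply Rabs_lt_between in H. lra.
Qed.

Lemma continuity_pt_le_left (f : R -> R) a m c : a < m -> continuity_pt f m ->
  (forall s, a <= s < m -> f s <= c) -> f m <= c.
Proof.
  intros Ham Hc H. destruct (Rle_dec (f m) c) as [|Hgt]; auto. exfalso.
  destruct (continuity_pt_gt_near f m c Hc) as [d [Hd Hz]]; [lra|].
  set (s := Rmax a (m - d / 2)).
  assert (Hs : a <= s < m) by (split; [apply Rmax_l | apply Rmax_lub_lt; lra]).
  assert (m - d / 2 <= s) by apply Rmax_r.
  assert (c < f s) by (apply Hz, Rabs_lt_between; lra).
  specialize (H s Hs). lra.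
Qed.

Lemma last_time_le (f : R -> R) a b c : a <= b ->
  (forall t, a <= t <= b -> continuity_pt f t) -> f a <= c ->
  exists m, a <= m <= b /\ f m <= c /\ forall s, m < s <= b -> c < f s.
Proof.
  intros Hab Hc Ha.
  destruct (completeness (fun s => a <= s <= b /\ f s <= c)) as [m [Hub Hlub]].
  { exists b; intros s [Hs _]; lra. }
  { exists a; split; [lra | exact Ha]. }
  assert (Hm : a <= m <= b).
  { split; [apply Hub; split; [lra | exact Ha] | apply Hlub; intros s [Hs _]; lra]. }
  exists m; split; [exact Hm | split].
  - destruct (Rle_dec (f m) c) as [|Hgt]; auto. exfalso.
    destruct (continuity_pt_gt_near f m c (Hc m Hm)) as [d [Hd Hz]]; [lra|].
    assert (m <= m - d / 2); [|lra].
    apply Hlub. intros s [Hs Hfs].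
    destruct (Rle_dec s (m - d / 2)) as [|Hn]; auto. exfalso.
    assert (s <= m) by (apply Hub; split; auto).
    assert (c < f s) by (apply Hz, Rabs_lt_between; lra). lra.
  - intros s Hs. destruct (Rlt_dec c (f s)) as [|Hn]; auto. exfalso.
    assert (s <= m) by (apply Hub; split; lra). lra.
Qed.

Lemma first_time_ge (f : R -> R) a b c : a <= b ->
  (forall t, a <= t <= b -> continuity_pt f t) -> c <= f b ->
  exists m, a <= m <= b /\ c <= f m /\ forall s, a <= s < m -> f s < c.
Proof.
  intros Hab Hc Hb.
  destruct (last_time_le (fun s => - f (a + b - s)) a b (- c)) as [m [Hm [Hfm Hafter]]];
    auto.
  - intros t Ht. apply continuity_pt_opp.
    apply (continuity_pt_comp (fun s => a + b - s) f); [|apply Hc; lra].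
    apply derivable_continuous_pt. reg.
  - replace (a + b - a) with b by ring. lra.
  - exists (a + b - m). split; [lra | split; [lra|]].
    intros s Hs. specialize (Hafter (a + b - s) ltac:(lra)).
    replace (a + b - (a + b - s)) with s in Hafter by ring. lra.
Qed.

Lemma left_max_derive_ge0 (f q : R -> R) (l : list R) a m : a < m ->
  (forall t, a <= t <= m -> continuity_pt f t) -> continuity_pt q m ->
  (forall t, a < t < m -> ~ In t l -> is_derive f t (q t)) ->
  (forall s, a <= s <= m -> f s <= f m) -> 0 <= q m.
Proof.
  intros Ham Hc Hq Hd Hmax. destruct (Rle_dec 0 (q m)) as [|Hneg]; auto. exfalso.
  destruct (continuity_pt_lt_near q m 0 Hq) as [d [Hd0 Hnear]]; [lra|].
  set (s := Rmax a (m - d / 2)).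
  assert (Hs : a <= s < m) by (split; [apply Rmax_l | apply Rmax_lub_lt; lra]).
  assert (m - d / 2 <= s) by apply Rmax_r.
  assert (Hdecr : f m - f s < 0 * (m - s)).
  { apply (piecewise_MVT_lt f 0 l); try lra.
    - intros t Ht. apply Hc; lra.
    - intros t Ht Hn. exists (q t). split; [apply Hd; auto; lra|].
      apply Hnear, Rabs_lt_between; lra. }
  assert (f s <= f m) by (apply Hmax; lra). lra.
Qed.

(* Solutions are only right-continuous at [0]; freezing them on [t < 0] makes them
   continuous everywhere, so that the lemmas on closed intervals apply from [0] on. *)
Definition clamp0 (f : R -> R) (t : R) : R := f (Rmax 0 t).

Lemma clamp0_eq f t : 0 <= t -> clamp0 f t = f t.
Proof. intros H. unfold clamp0. rewrite Rmax_right; auto. Qed.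

Lemma clamp0_continuity (f : R -> R) :
  filterlim f (at_right 0) (locally (f 0)) -> (forall t, 0 < t -> continuous f t) ->
  forall t, continuity_pt (clamp0 f) t.
Proof.
  intros Hr Hc t. apply continuity_pt_locally. intros eps. unfold clamp0.
  destruct (Rtotal_order t 0) as [Ht|[->|Ht]].
  - exists (mkposreal (- t) ltac:(lra)). intros z Hz.
    change (Rabs (z - t) < - t) in Hz. apply Rabs_lt_between in Hz.
    rewrite !Rmax_left by lra. rewrite Rminus_diag, Rabs_R0. apply cond_pos.
  - destruct (proj1 (filterlim_locally f (f 0)) Hr eps) as [d Hd].
    exists d. intros z Hz. rewrite (Rmax_left 0 0) by lra.
    destruct (Rle_dec z 0) as [Hz0|Hz0].
    + rewrite Rmax_left, Rminus_diag, Rabs_R0 by lra. apply cond_pos.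
    + rewrite Rmax_right by lra. apply (Hd z); [exact Hz | lra].
  - destruct (proj1 (filterlim_locally f (f t)) (Hc t Ht) eps) as [d Hd].
    exists (mkposreal (Rmin d t) (Rmin_pos _ _ (cond_pos d) Ht)). intros z Hz.
    change (Rabs (z - t) < Rmin d t) in Hz.
    assert (Hzd : Rabs (z - t) < d) by (eapply Rlt_le_trans; [exact Hz | apply Rmin_l]).
    assert (Hzt : Rabs (z - t) < t) by (eapply Rlt_le_trans; [exact Hz | apply Rmin_r]).
    apply Rabs_lt_between in Hzt.
    rewrite !Rmax_right by lra. apply (Hd z Hzd).
Qed.

Lemma clamp0_derive (f : R -> R) t v : 0 < t -> is_derive f t v -> is_derive (clamp0 f) t v.
Proof.
  intros Ht H. apply (is_derive_ext_loc f); [|exact H].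
  exists (mkposreal t Ht). intros s Hs. change (Rabs (s - t) < t) in Hs.
  apply Rabs_lt_between in Hs. symmetry. apply clamp0_eq; lra.
Qed.

(** * Local Lipschitz estimates *)

Definition box (p : R * R) (r x y : R) : Prop :=
  Rabs (x - fst p) < r /\ Rabs (y - snd p) < r.

Lemma box_le p r r' x y : r <= r' -> box p r x y -> box p r' x y.
Proof. intros H [H1 H2]; split; lra. Qed.

Lemma box_center p r : 0 < r -> box p r (fst p) (snd p).
Proof. intros H. unfold box. rewrite !Rminus_diag, Rabs_R0. lra. Qed.

Lemma open_box (U : R * R -> Prop) p : open U -> U p ->
  exists d, 0 < d /\ forall x y, box p d x y -> U (x, y).
Proof.
  intros Ho Hp. destruct (Ho p Hp) as [d Hd].
  exists d; split; [apply cond_pos|]. intros x y [H1 H2]. apply Hd. split; assumption.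
Qed.

Lemma continuous_box (g : R * R -> R) (p : R * R) eps : continuous g p -> 0 < eps ->
  exists d, 0 < d /\ forall x y, box p d x y -> Rabs (g (x, y) - g p) < eps.
Proof.
  intros Hc He.
  destruct (proj1 (filterlim_locally g (g p)) Hc (mkposreal eps He)) as [d Hd].
  exists d; split; [apply cond_pos|]. intros x y [H1 H2]. apply (Hd (x, y)). split; assumption.
Qed.

Definition lipschitz_near (f : R -> R -> R) (p : R * R) : Prop :=
  exists r L, 0 < r /\ 0 <= L /\ forall x y x' y', box p r x y -> box p r x' y' ->
    Rabs (f x y - f x' y') <= L * (Rabs (x - x') + Rabs (y - y')).

Lemma lipschitz_near_fst p : lipschitz_near (fun x _ => x) p.
Proof.
  exists 1, 1. repeat split; try lra. intros x y x' y' _ _.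
  generalize (Rabs_pos (y - y')); lra.
Qed.

Lemma lipschitz_near_snd p : lipschitz_near (fun _ y => y) p.
Proof.
  exists 1, 1. repeat split; try lra. intros x y x' y' _ _.
  generalize (Rabs_pos (x - x')); lra.
Qed.

Lemma lipschitz_box_bound (f : R -> R -> R) p r L : 0 < r -> 0 <= L ->
  (forall x y x' y', box p r x y -> box p r x' y' ->
     Rabs (f x y - f x' y') <= L * (Rabs (x - x') + Rabs (y - y'))) ->
  forall x y, box p r x y -> Rabs (f x y) <= Rabs (f (fst p) (snd p)) + L * (2 * r).
Proof.
  intros Hr HL Hlip x y Hxy.
  assert (H := Hlip x y (fst p) (snd p) Hxy (box_center p r Hr)).
  destruct Hxy as [Hx Hy].
  assert (L * (Rabs (x - fst p) + Rabs (y - snd p)) <= L * (2 * r))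
    by (apply Rmult_le_compat_l; lra).
  generalize (Rabs_triang_inv (f x y) (f (fst p) (snd p))). lra.
Qed.

Lemma lipschitz_near_mult (f g : R -> R -> R) p :
  lipschitz_near f p -> lipschitz_near g p -> lipschitz_near (fun x y => f x y * g x y) p.
Proof.
  intros [rf [Lf [Hrf [HLf Hf]]]] [rg [Lg [Hrg [HLg Hg]]]].
  set (Mf := Rabs (f (fst p) (snd p)) + Lf * (2 * rf)).
  set (Mg := Rabs (g (fst p) (snd p)) + Lg * (2 * rg)).
  assert (HMf : 0 <= Mf) by (unfold Mf; generalize (Rabs_pos (f (fst p) (snd p))); nra).
  assert (HMg : 0 <= Mg) by (unfold Mg; generalize (Rabs_pos (g (fst p) (snd p))); nra).
  exists (Rmin rf rg), (Lf * Mg + Mf * Lg). split; [apply Rmin_pos; auto|split; [nra|]].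
  intros x y x' y' Hb Hb'.
  assert (Bf := fun x y (H : box p (Rmin rf rg) x y) => box_le p _ rf x y (Rmin_l rf rg) H).
  assert (Bg := fun x y (H : box p (Rmin rf rg) x y) => box_le p _ rg x y (Rmin_r rf rg) H).
  set (D := Rabs (x - x') + Rabs (y - y')).
  assert (HD : 0 <= D) by (unfold D; generalize (Rabs_pos (x - x')) (Rabs_pos (y - y')); lra).
  assert (Hf1 := Hf _ _ _ _ (Bf _ _ Hb) (Bf _ _ Hb')).
  assert (Hg1 := Hg _ _ _ _ (Bg _ _ Hb) (Bg _ _ Hb')).
  assert (Hgb := lipschitz_box_bound g p rg Lg Hrg HLg Hg x y (Bg _ _ Hb)).
  assert (Hfb := lipschitz_box_bound f p rf Lf Hrf HLf Hf x' y' (Bf _ _ Hb')).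
  fold Mf in Hfb. fold Mg in Hgb. fold D in Hf1, Hg1.
  replace (f x y * g x y - f x' y' * g x' y')
    with ((f x y - f x' y') * g x y + f x' y' * (g x y - g x' y')) by ring.
  eapply Rle_trans; [apply Rabs_triang|]. rewrite !Rabs_mult.
  assert (Rabs (f x y - f x' y') * Rabs (g x y) <= Lf * D * Mg)
    by (apply Rmult_le_compat; auto using Rabs_pos).
  assert (Rabs (f x' y') * Rabs (g x y - g x' y') <= Mf * (Lg * D))
    by (apply Rmult_le_compat; auto using Rabs_pos).
  nra.
Qed.

Lemma MVT_abs_bound (h : R -> R) a b K :
  (forall s, Rmin a b <= s <= Rmax a b -> ex_derive h s /\ Rabs (Derive h s) <= K) ->
  Rabs (h a - h b) <= K * Rabs (a - b).
Proof.
  intros H. rewrite Rmin_comm, Rmax_comm in H.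
  destruct (MVT_gen h b a (Derive h)) as [c [Hc E]].
  - intros x Hx. apply Derive_correct, H. lra.
  - intros x Hx. apply continuity_pt_filterlim, (ex_derive_continuous h), H, Hx.
  - rewrite E, Rabs_mult. apply Rmult_le_compat_r; [apply Rabs_pos | apply H, Hc].
Qed.

Lemma between_lt s a b c r : Rmin a b <= s <= Rmax a b ->
  Rabs (a - c) < r -> Rabs (b - c) < r -> Rabs (s - c) < r.
Proof.
  intros Hs Ha Hb. apply Rabs_lt_between in Ha. apply Rabs_lt_between in Hb.
  apply Rabs_lt_between. unfold Rmin, Rmax in Hs. destruct (Rle_dec a b); lra.
Qed.

Lemma partial_bound (d : R -> R -> R) (p : R * R) : continuous (fun q => d (fst q) (snd q)) p ->
  exists r, 0 < r /\ forall x y, box p r x y -> Rabs (d x y) <= Rabs (d (fst p) (snd p)) + 1.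
Proof.
  intros Hc. destruct (continuous_box _ p 1 Hc) as [r [Hr H]]; [lra|].
  exists r; split; auto. intros x y Hb. specialize (H x y Hb). simpl in H.
  generalize (Rabs_triang_inv (d x y) (d (fst p) (snd p))). lra.
Qed.

Lemma C1_lipschitz_near (U : R * R -> Prop) (f : R -> R -> R) p :
  open U -> C1_on U f -> U p -> lipschitz_near f p.
Proof.
  intros Ho HC Hp.
  destruct (open_box U p Ho Hp) as [r0 [Hr0 HU]].
  destruct (HC p Hp) as [_ [_ [_ [Hcx Hcy]]]].
  destruct (partial_bound _ p Hcx) as [rx [Hrx Hbx]].
  destruct (partial_bound _ p Hcy) as [ry [Hry Hby]].
  set (r := Rmin r0 (Rmin rx ry)).
  assert (Hr0' : r <= r0) by apply Rmin_l.
  assert (Hrx' : r <= rx) by (eapply Rle_trans; [apply Rmin_r | apply Rmin_l]).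
  assert (Hry' : r <= ry) by (eapply Rle_trans; [apply Rmin_r | apply Rmin_r]).
  set (Kx := Rabs (partial_x f (fst p) (snd p)) + 1).
  set (Ky := Rabs (partial_y f (fst p) (snd p)) + 1).
  assert (0 <= Kx) by (unfold Kx; generalize (Rabs_pos (partial_x f (fst p) (snd p))); lra).
  assert (0 <= Ky) by (unfold Ky; generalize (Rabs_pos (partial_y f (fst p) (snd p))); lra).
  exists r, (Kx + Ky). split; [repeat apply Rmin_pos; auto | split; [lra|]].
  intros x y x' y' [Hx Hy] [Hx' Hy'].
  assert (Hfx : Rabs (f x y - f x' y) <= Kx * Rabs (x - x')).
  { apply (MVT_abs_bound (fun s => f s y)). intros s Hs.
    assert (Hb : box p r s y) by (split; [eapply between_lt; eauto | exact Hy]).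
    split.
    - apply (HC (s, y)), HU, (box_le p r r0); auto.
    - apply (Hbx s y), (box_le p r rx); auto. }
  assert (Hfy : Rabs (f x' y - f x' y') <= Ky * Rabs (y - y')).
  { apply (MVT_abs_bound (fun s => f x' s)). intros s Hs.
    assert (Hb : box p r x' s) by (split; [exact Hx' | eapply between_lt; eauto]).
    split.
    - apply (HC (x', s)), HU, (box_le p r r0); auto.
    - apply (Hby x' s), (box_le p r ry); auto. }
  replace (f x y - f x' y') with ((f x y - f x' y) + (f x' y - f x' y')) by ring.
  eapply Rle_trans; [apply Rabs_triang|].
  generalize (Rabs_pos (x - x')) (Rabs_pos (y - y')). nra.
Qed.

(** * Uniqueness for planar systems *)

Definition solves (F G : R -> R -> R -> R) (l : list R) (a b : R) (x y : R -> R) : Prop :=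
  (forall t, a <= t <= b -> continuity_pt x t /\ continuity_pt y t) /\
  (forall t, a < t < b -> ~ In t l ->
     is_derive x t (F t (x t) (y t)) /\ is_derive y t (G t (x t) (y t))).

Lemma solves_weaken {F G F' G' l l' a b a' b' x y} : solves F G l a b x y ->
  a <= a' -> b' <= b -> (forall t, In t l -> In t l') ->
  (forall t p q, a' < t < b' -> F t p q = F' t p q /\ G t p q = G' t p q) ->
  solves F' G' l' a' b' x y.
Proof.
  intros [Hc Hd] Ha Hb Hl HF. split.
  - intros t Ht. apply Hc; lra.
  - intros t Ht Hn. destruct (HF t (x t) (y t) Ht) as [<- <-].
    apply Hd; [lra|]. intros Hin. apply Hn, Hl, Hin.
Qed.

Definition lipschitz_field (F G : R -> R -> R -> R) (a b : R) (p : R * R) : Prop :=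
  exists r L, 0 < r /\ 0 <= L /\ forall t x y x' y', a < t < b ->
    box p r x y -> box p r x' y' ->
    Rabs (F t x y - F t x' y') + Rabs (G t x y - G t x' y')
      <= L * (Rabs (x - x') + Rabs (y - y')).

Lemma is_derive_Rminus (f g : R -> R) t df dg :
  is_derive f t df -> is_derive g t dg -> is_derive (fun s => f s - g s) t (df - dg).
Proof. exact (is_derive_minus f g t df dg). Qed.

Lemma self_bounded_zero (D : R -> R) m e K : m <= e -> 0 <= K -> K * (e - m) < 1 ->
  (forall t, m <= t <= e -> continuity_pt D t) -> (forall t, m <= t <= e -> 0 <= D t) ->
  (forall M, (forall s, m <= s <= e -> D s <= M) ->
     forall t, m <= t <= e -> D t <= K * M * (t - m)) ->
  forall t, m <= t <= e -> D t = 0.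
Proof.
  intros Hme HK Hsmall Hc Hpos Hbound.
  destruct (continuity_ab_maj D m e Hme Hc) as [tau [Hmax Htau]].
  assert (HM : D tau <= K * D tau * (e - m)).
  { eapply Rle_trans; [apply (Hbound (D tau) Hmax tau Htau)|].
    apply Rmult_le_compat_l; [apply Rmult_le_pos; auto; apply Hpos; lra | lra]. }
  assert (Hz : D tau <= 0).
  { assert (0 <= D tau) by (apply Hpos; lra). nra. }
  intros t Ht. specialize (Hmax t Ht). specialize (Hpos t Ht). lra.
Qed.

Section Uniqueness.

Variables (F G : R -> R -> R -> R) (l : list R) (a b : R) (x1 y1 x2 y2 : R -> R).
Hypotheses (sol1 : solves F G l a b x1 y1) (sol2 : solves F G l a b x2 y2).

Let D t := Rabs (x1 t - x2 t) + Rabs (y1 t - y2 t).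

Lemma dist_continuity t : a <= t <= b -> continuity_pt D t.
Proof.
  intros Ht. destruct (proj1 sol1 t Ht), (proj1 sol2 t Ht).
  apply continuity_pt_plus; apply (continuity_pt_comp _ Rabs);
    solve [apply continuity_pt_minus; auto | apply Rcontinuity_abs].
Qed.

Lemma dist_pos t : 0 <= D t.
Proof. unfold D. generalize (Rabs_pos (x1 t - x2 t)) (Rabs_pos (y1 t - y2 t)). lra. Qed.

Lemma dist_zero t : D t <= 0 -> x1 t = x2 t /\ y1 t = y2 t.
Proof.
  unfold D. intros H. generalize (Rabs_pos (x1 t - x2 t)) (Rabs_pos (y1 t - y2 t)). intros.
  split; apply Rminus_diag_uniq, Rabs_eq_0; lra.
Qed.

Lemma solves_gap_growth m t K : a <= m -> m <= t <= b ->
  (forall s, m < s < t ->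
     Rabs (F s (x1 s) (y1 s) - F s (x2 s) (y2 s)) + Rabs (G s (x1 s) (y1 s) - G s (x2 s) (y2 s))
       <= K) ->
  Rabs ((x1 t - x2 t) - (x1 m - x2 m)) <= K * (t - m) /\
  Rabs ((y1 t - y2 t) - (y1 m - y2 m)) <= K * (t - m).
Proof.
  intros Ham Ht Hdiff.
  assert (Hcont : forall s, m <= s <= t -> continuity_pt x1 s /\ continuity_pt y1 s /\
                                          continuity_pt x2 s /\ continuity_pt y2 s).
  { intros s Hs. destruct (proj1 sol1 s ltac:(lra)), (proj1 sol2 s ltac:(lra)); auto. }
  split.
  - apply (piecewise_MVT_abs (fun s => x1 s - x2 s) _ l); try lra.
    + intros s Hs. destruct (Hcont s Hs) as [? [? [? ?]]]. apply continuity_pt_minus; auto.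
    + intros s Hs Hn. destruct (proj2 sol1 s ltac:(lra) Hn) as [E1 _].
      destruct (proj2 sol2 s ltac:(lra) Hn) as [E2 _].
      eexists; split; [exact (is_derive_Rminus x1 x2 s _ _ E1 E2)|].
      specialize (Hdiff s Hs).
      generalize (Rabs_pos (G s (x1 s) (y1 s) - G s (x2 s) (y2 s))). lra.
  - apply (piecewise_MVT_abs (fun s => y1 s - y2 s) _ l); try lra.
    + intros s Hs. destruct (Hcont s Hs) as [? [? [? ?]]]. apply continuity_pt_minus; auto.
    + intros s Hs Hn. destruct (proj2 sol1 s ltac:(lra) Hn) as [_ E1].
      destruct (proj2 sol2 s ltac:(lra) Hn) as [_ E2].
      eexists; split; [exact (is_derive_Rminus y1 y2 s _ _ E1 E2)|].
      specialize (Hdiff s Hs).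
      generalize (Rabs_pos (F s (x1 s) (y1 s) - F s (x2 s) (y2 s))). lra.
Qed.

(* Two solutions that meet at [m] stay within the box of the Lipschitz estimate for a
   while, on which their distance is bounded by a multiple of its own maximum. *)
Lemma solves_agree_right m : a <= m < b -> lipschitz_field F G a b (x1 m, y1 m) ->
  x1 m = x2 m -> y1 m = y2 m -> exists e, m < e <= b /\ forall t, m <= t <= e -> D t = 0.
Proof.
  intros Hm [r [L [Hr [HL Hlip]]]] Hx Hy.
  destruct (proj1 sol1 m ltac:(lra)) as [C1 C2]. destruct (proj1 sol2 m ltac:(lra)) as [C3 C4].
  destruct (continuity_pt_ball _ _ r C1 Hr) as [d1 [Hd1 H1]].
  destruct (continuity_pt_ball _ _ r C2 Hr) as [d2 [Hd2 H2]].
  destruct (continuity_pt_ball _ _ r C3 Hr) as [d3 [Hd3 H3]].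
  destruct (continuity_pt_ball _ _ r C4 Hr) as [d4 [Hd4 H4]].
  set (d := Rmin (Rmin d1 d2) (Rmin d3 d4)).
  assert (Hd : 0 < d) by (unfold d; repeat apply Rmin_pos; auto).
  assert (Hdi : d <= d1 /\ d <= d2 /\ d <= d3 /\ d <= d4).
  { unfold d. generalize (Rmin_l d1 d2) (Rmin_r d1 d2) (Rmin_l d3 d4) (Rmin_r d3 d4)
      (Rmin_l (Rmin d1 d2) (Rmin d3 d4)) (Rmin_r (Rmin d1 d2) (Rmin d3 d4)). lra. }
  set (h := Rmin (Rmin (b - m) (d / 2)) (/ (4 * (L + 1)))).
  assert (Hh : 0 < h) by (unfold h; repeat apply Rmin_pos; try lra;
    apply Rinv_0_lt_compat; lra).
  assert (Hhb : h <= b - m /\ h <= d / 2 /\ h <= / (4 * (L + 1))).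
  { unfold h. generalize (Rmin_l (b - m) (d / 2)) (Rmin_r (b - m) (d / 2))
      (Rmin_l (Rmin (b - m) (d / 2)) (/ (4 * (L + 1))))
      (Rmin_r (Rmin (b - m) (d / 2)) (/ (4 * (L + 1)))). lra. }
  assert (HLh : 2 * L * h < 1).
  { assert (Hi : (L + 1) * / (4 * (L + 1)) = / 4) by (field; lra).
    assert (L * h <= (L + 1) * / (4 * (L + 1))) by
      (apply Rmult_le_compat; lra). lra. }
  assert (Hboxes : forall s, m <= s <= m + h -> box (x1 m, y1 m) r (x1 s) (y1 s) /\
                                              box (x1 m, y1 m) r (x2 s) (y2 s)).
  { intros s Hs. assert (Hsm : Rabs (s - m) < d) by (apply Rabs_lt_between; lra).
    unfold box; simpl. rewrite Hx at 2. rewrite Hy at 2.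
    repeat split; [apply H1 | apply H2 | apply H3 | apply H4]; lra. }
  exists (m + h). split; [lra|].
  apply (self_bounded_zero D m (m + h) (2 * L)); try lra.
  - intros t Ht. apply dist_continuity; lra.
  - intros t _. apply dist_pos.
  - intros M HM t Ht.
    destruct (solves_gap_growth m t (L * M)) as [Ex Ey]; [lra | lra | |].
    { intros s Hs. destruct (Hboxes s ltac:(lra)) as [B1 B2].
      eapply Rle_trans; [apply (Hlip s); auto; lra|].
      apply Rmult_le_compat_l; auto. apply HM; lra. }
    rewrite Hx, Hy, !Rminus_diag, !Rminus_0_r in *. unfold D. lra.
Qed.

Lemma solves_unique (S : R * R -> Prop) :
  (forall p, S p -> lipschitz_field F G a b p) -> (forall t, a <= t <= b -> S (x1 t, y1 t)) ->
  x1 a = x2 a -> y1 a = y2 a -> forall t, a <= t <= b -> x1 t = x2 t /\ y1 t = y2 t.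
Proof.
  intros Hlip HS Hx Hy t Ht. apply dist_zero.
  destruct (last_time_le D a t 0) as [m [Hm [HDm Hpos]]]; try lra.
  - intros s Hs. apply dist_continuity; lra.
  - unfold D. rewrite Hx, Hy, !Rminus_diag, Rabs_R0. lra.
  - destruct (Req_dec m t) as [<-|Hne]; auto. exfalso.
    destruct (dist_zero m HDm) as [Ex Ey].
    destruct (solves_agree_right m ltac:(lra) (Hlip _ (HS m ltac:(lra))) Ex Ey)
      as [e [He Hz]].
    set (s := Rmin e t).
    assert (m < s <= t) by (split; [apply Rmin_glb_lt | apply Rmin_r]; lra).
    assert (Hs0 := Hz s ltac:(split; [lra | apply Rmin_l])).
    specialize (Hpos s ltac:(lra)). lra.
Qed.

End Uniqueness.

(** * Improper integrals *)

Lemma is_RInt_zero (a b : R) : is_RInt (fun _ => 0) a b 0.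
Proof.
  assert (H := @is_RInt_const R_NormedModule a b 0).
  replace (scal (b - a) (0 : R_NormedModule)) with 0 in H
    by (unfold scal; simpl; unfold mult; simpl; ring).
  exact H.
Qed.

Lemma is_RInt_gen_supported (u g : R -> R) T0 T1 I : 0 <= T0 <= T1 ->
  (forall t, t < T0 -> u t = 0) -> (forall t, T1 < t -> u t = 0) ->
  (forall t, T0 < t < T1 -> u t = g t) -> is_RInt g T0 T1 I ->
  is_RInt_gen u (at_point 0) (Rbar_locally p_infty) I.
Proof.
  intros HT Hbefore Hafter Hon Hg P HP.
  apply Filter_prod with (fun a => a = 0) (fun b => T1 < b); [reflexivity | exists T1; auto|].
  intros a b -> Hb. exists I. split; [|apply locally_singleton, HP].
  assert (Hext : forall c d v, c <= d -> (forall t, c < t < d -> u t = v t) ->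
      forall J, is_RInt v c d J -> is_RInt u c d J).
  { intros c d v Hcd H J HJ. apply is_RInt_ext with v; auto.
    intros t Ht. rewrite Rmin_left, Rmax_right in Ht by lra. symmetry; apply H; lra. }
  assert (E1 : is_RInt u 0 T0 0)
    by (apply (Hext _ _ (fun _ => 0)); [lra | intros; apply Hbefore; lra | apply is_RInt_zero]).
  assert (E2 : is_RInt u T0 T1 I) by (apply (Hext _ _ g); auto; lra).
  assert (E3 : is_RInt u T1 b 0)
    by (apply (Hext _ _ (fun _ => 0)); [lra | intros; apply Hafter; lra | apply is_RInt_zero]).
  assert (H := is_RInt_Chasles u 0 T1 b _ _ (is_RInt_Chasles u 0 T0 T1 _ _ E1 E2) E3).
  unfold plus in H; simpl in H. replace I with (0 + I + 0) by ring. exact H.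
Qed.

Lemma is_RInt_affine_descent (f : R -> R) T0 h0 xbar k : 0 < k -> ex_RInt f xbar h0 ->
  is_RInt (fun t => f (h0 - k * (t - T0))) T0 (T0 + (h0 - xbar) / k) (/ k * RInt f xbar h0).
Proof.
  intros Hk Hex. set (T1 := T0 + (h0 - xbar) / k).
  assert (Hlin : is_RInt f (- k * T0 + (h0 + k * T0)) (- k * T1 + (h0 + k * T0))
                   (RInt f h0 xbar)).
  { replace (- k * T0 + (h0 + k * T0)) with h0 by ring.
    replace (- k * T1 + (h0 + k * T0)) with xbar by (unfold T1; field; lra).
    apply (RInt_correct (V := R_CompleteNormedModule)), ex_RInt_swap, Hex. }
  assert (H := is_RInt_scal _ T0 T1 (- / k) _ (is_RInt_comp_lin f (- k) (h0 + k * T0) T0 T1 _ Hlin)).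
  apply is_RInt_ext with (fun t => scal (- / k) (scal (- k) (f (- k * t + (h0 + k * T0))))).
  - intros t _. unfold scal; simpl; unfold mult; simpl.
    replace (- k * t + (h0 + k * T0)) with (h0 - k * (t - T0)) by ring. field. lra.
  - replace (/ k * RInt f xbar h0) with (scal (- / k) (RInt f h0 xbar)); [exact H|].
    rewrite <- (opp_RInt_swap f xbar h0 Hex). unfold scal, opp; simpl; unfold mult; simpl. ring.
Qed.

(** * The CBF-SIR field *)

Definition infection (beta : R -> R -> R) (x y : R) : R := beta x y * x * y.

(* [infection beta x y = gamma R(x, y) y]; the control enters through [c = 1 - u]. *)
Definition sir_x (beta : R -> R -> R) (c : R -> R) (t x y : R) : R :=
  - c t * infection beta x y.

Definition sir_y (gamma : R) (beta : R -> R -> R) (c : R -> R) (t x y : R) : R :=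
  c t * infection beta x y - gamma * y.

Section Contact_rate.

Variables (beta : R -> R -> R) (U : R * R -> Prop).
Hypotheses (U_open : open U) (S_in_U : forall x y, inS x y -> U (x, y))
  (beta_C1 : C1_on U beta) (beta_A1 : assumption1 beta)
  (beta_pos : forall x y, inS x y -> 0 < beta x y).

Lemma beta_ex_derive_x x y : inS x y -> ex_derive (fun s => beta s y) x.
Proof. intros H. apply (beta_C1 (x, y)), S_in_U, H. Qed.

Lemma beta_ex_derive_y x y : inS x y -> ex_derive (fun s => beta x s) y.
Proof. intros H. apply (beta_C1 (x, y)), S_in_U, H. Qed.

Lemma x_beta_increasing y a b : 0 <= y -> 0 <= a < b -> b + y <= 1 ->
  a * beta a y < b * beta b y.
Proof.
  intros Hy Hab Hb.
  assert (Hd : forall s, a <= s <= b ->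
    is_derive (fun s => s * beta s y) s (beta s y + s * partial_x beta s y)).
  { intros s Hs. assert (HS : inS s y) by (unfold inS; lra).
    assert (H := is_derive_mult (fun s => s) (fun s => beta s y) s 1 _ (is_derive_id s)
      (Derive_correct _ _ (beta_ex_derive_x s y HS)) Rmult_comm).
    unfold mult, plus in H; simpl in H.
    replace (beta s y + s * partial_x beta s y)
      with (1 * beta s y + s * Derive (fun s => beta s y) s) by (unfold partial_x; ring).
    exact H. }
  destruct (MVT_interior (fun s => s * beta s y) a b) as [c [Hc E]]; [lra | | |].
  - intros c Hc. eexists. apply Hd. lra.
  - intros c Hc. apply continuity_pt_filterlim, (ex_derive_continuous (fun s => s * beta s y)).
    eexists. apply Hd, Hc.
  - assert (Ed : Derive (fun s : R => s * beta s y) c = beta c y + c * partial_x beta c y)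
      by (apply is_derive_unique, Hd; lra).
    rewrite Ed in E.
    assert (HS : inS c y) by (unfold inS; lra).
    destruct (beta_A1 c y HS) as [Hpos _].
    assert (0 < (beta c y + c * partial_x beta c y) * (b - a)) by (apply Rmult_lt_0_compat; lra).
    lra.
Qed.

Lemma beta_nonincreasing_y x y y' : inS x y -> 0 <= y' <= y -> beta x y <= beta x y'.
Proof.
  intros HS Hy'.
  enough (H : beta x y - beta x y' <= 0 * (y - y')) by lra.
  apply (piecewise_MVT_le (fun s => beta x s) 0 nil); try lra.
  - intros t Ht. assert (HSt : inS x t) by (unfold inS in *; lra).
    apply continuity_pt_filterlim, (ex_derive_continuous (fun s => beta x s)).
    apply beta_ex_derive_y, HSt.
  - intros t Ht _. assert (HSt : inS x t) by (unfold inS in *; lra).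
    exists (partial_y beta x t). split.
    + apply Derive_correct, beta_ex_derive_y, HSt.
    + apply (beta_A1 x t HSt).
Qed.

Lemma infection_lipschitz_near p : U p -> lipschitz_near (infection beta) p.
Proof.
  intros Hp. unfold infection.
  apply (lipschitz_near_mult (fun x y => beta x y * x) (fun _ y => y));
    [apply (lipschitz_near_mult beta (fun x _ => x)) | ].
  - apply (C1_lipschitz_near U); auto.
  - apply lipschitz_near_fst.
  - apply lipschitz_near_snd.
Qed.

Lemma infection_continuity (x y : R -> R) t : continuity_pt x t -> continuity_pt y t ->
  inS (x t) (y t) -> continuity_pt (fun s => infection beta (x s) (y s)) t.
Proof.
  intros Hx Hy HS. unfold infection.
  repeat apply continuity_pt_mult; auto.
  apply continuity_pt_filterlim.
  apply (continuous_comp_2 x y beta); try apply continuity_pt_filterlim; auto.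
  apply (beta_C1 (x t, y t)), S_in_U, HS.
Qed.

Lemma sir_continuity gamma (c x y : R -> R) t : continuity_pt c t ->
  continuity_pt x t -> continuity_pt y t -> inS (x t) (y t) ->
  continuity_pt (fun s => sir_x beta c s (x s) (y s)) t /\
  continuity_pt (fun s => sir_y gamma beta c s (x s) (y s)) t.
Proof.
  intros Hc Hx Hy HS. assert (HI := infection_continuity x y t Hx Hy HS).
  unfold sir_x, sir_y. split.
  - apply continuity_pt_mult; auto. apply continuity_pt_opp, Hc.
  - apply continuity_pt_minus; apply continuity_pt_mult; auto.
    apply continuity_pt_const. intros ? ?; reflexivity.
Qed.

Lemma rho_continuity gamma x y : inS x y -> 0 < x ->
  continuity_pt (fun s => rho gamma beta s y) x.
Proof.
  intros HS Hx. unfold rho.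
  assert (Hb := beta_pos x y HS).
  apply continuity_pt_minus; [apply continuity_pt_const; intros ? ?; reflexivity|].
  apply continuity_pt_div; [apply continuity_pt_const; intros ? ?; reflexivity | |].
  - apply continuity_pt_mult; [apply continuity_pt_id|].
    apply continuity_pt_filterlim, (ex_derive_continuous (fun s => beta s y)).
    apply beta_ex_derive_x, HS.
  - apply Rgt_not_eq, Rmult_lt_0_compat; auto.
Qed.

Lemma infection_nonneg x y : inS x y -> 0 <= infection beta x y.
Proof.
  intros HS. unfold infection. assert (H := beta_pos x y HS). unfold inS in HS.
  apply Rmult_le_pos; [apply Rmult_le_pos|]; lra.
Qed.

Lemma sir_lipschitz_field gamma (c : R -> R) a b :
  (forall t, a < t < b -> Rabs (c t) <= 1) ->
  forall p, U p -> lipschitz_field (sir_x beta c) (sir_y gamma beta c) a b p.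
Proof.
  intros Hc p Hp.
  destruct (infection_lipschitz_near p Hp) as [r [L [Hr [HL Hlip]]]].
  exists r, (2 * L + Rabs gamma). split; [exact Hr | split; [generalize (Rabs_pos gamma); lra|]].
  intros t x y x' y' Ht Hb Hb'. unfold sir_x, sir_y.
  specialize (Hlip x y x' y' Hb Hb'). specialize (Hc t Ht).
  set (dI := infection beta x y - infection beta x' y') in *.
  replace (- c t * infection beta x y - - c t * infection beta x' y') with (- (c t * dI))
    by (unfold dI; ring).
  replace (c t * infection beta x y - gamma * y - (c t * infection beta x' y' - gamma * y'))
    with (c t * dI + - (gamma * (y - y'))) by (unfold dI; ring).
  rewrite Rabs_Ropp. eapply Rle_trans; [apply Rplus_le_compat_l, Rabs_triang|].
  rewrite Rabs_Ropp, !Rabs_mult.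
  assert (Rabs (c t) * Rabs dI <= Rabs dI)
    by (rewrite <- (Rmult_1_l (Rabs dI)) at 2; apply Rmult_le_compat_r; auto using Rabs_pos).
  assert (Rabs gamma * Rabs (y - y') <= Rabs gamma * (Rabs (x - x') + Rabs (y - y')))
    by (apply Rmult_le_compat_l; [apply Rabs_pos | generalize (Rabs_pos (x - x')); lra]).
  lra.
Qed.

End Contact_rate.

Lemma plateau_solves gamma beta (c : R -> R) l T0 T1 h0 ybar :
  (forall t, T0 < t < T1 -> c t * infection beta (h0 - gamma * (t - T0) * ybar) ybar = gamma * ybar) ->
  solves (sir_x beta c) (sir_y gamma beta c) l T0 T1
    (fun t => h0 - gamma * (t - T0) * ybar) (fun _ => ybar).
Proof.
  intros Hc. split.
  - intros t _. split; [apply derivable_continuous_pt; reg|].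
    apply continuity_pt_const. intros ? ?; reflexivity.
  - intros t Ht _. unfold sir_x, sir_y. rewrite Ropp_mult_distr_l_reverse, Hc by exact Ht.
    split.
    + auto_derive; [exact I | ring].
    + rewrite Rminus_diag. apply (is_derive_const ybar).
Qed.

Lemma one_minus_rho_infection gamma beta x y : x <> 0 -> beta x y <> 0 ->
  (1 - rho gamma beta x y) * infection beta x y = gamma * y.
Proof. intros Hx Hb. unfold rho, infection. field. auto. Qed.

Section Threshold.

Variables (gamma : R) (beta : R -> R -> R) (U : R * R -> Prop).
Hypotheses (S_in_U : forall x y, inS x y -> U (x, y))
  (beta_C1 : C1_on U beta) (beta_A1 : assumption1 beta)
  (beta_pos : forall x y, inS x y -> 0 < beta x y).
Variables (xbar ybar : R).
Hypotheses (xbar_pos : 0 < xbar) (ybar_pos : 0 < ybar) (xbar_ybar_S : xbar + ybar <= 1)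
  (threshold : xbar * beta xbar ybar = gamma).

Lemma x_beta_lt_gamma x : 0 <= x < xbar -> x * beta x ybar < gamma.
Proof. intros Hx. rewrite <- threshold. apply (x_beta_increasing beta U); auto; lra. Qed.

Lemma gamma_le_x_beta x : xbar <= x -> x + ybar <= 1 -> gamma <= x * beta x ybar.
Proof.
  intros Hx Hxy. destruct (Req_dec x xbar) as [->|Hne]; [lra|].
  rewrite <- threshold. left. apply (x_beta_increasing beta U); auto; lra.
Qed.

Lemma infection_lt_threshold x : 0 <= x < xbar -> infection beta x ybar < gamma * ybar.
Proof.
  intros Hx. unfold infection. assert (H := x_beta_lt_gamma x Hx).
  replace (beta x ybar * x * ybar) with (ybar * (x * beta x ybar)) by ring.
  rewrite (Rmult_comm gamma). apply Rmult_lt_compat_l; auto.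
Qed.

Lemma infection_le_threshold x y : inS x y -> x <= xbar -> ybar <= y ->
  infection beta x y <= gamma * y.
Proof.
  intros HS Hx Hy. unfold infection.
  assert (Hb : beta x y <= beta x ybar)
    by (apply (beta_nonincreasing_y beta U); auto; lra).
  assert (Hg : x * beta x ybar <= gamma).
  { destruct (Req_dec x xbar) as [->|Hne]; [lra|].
    left; apply x_beta_lt_gamma. unfold inS in HS; lra. }
  unfold inS in HS.
  replace (beta x y * x * y) with (y * (x * beta x y)) by ring.
  rewrite (Rmult_comm gamma). apply Rmult_le_compat_l; [lra|].
  apply Rle_trans with (x * beta x ybar); [apply Rmult_le_compat_l|]; lra.
Qed.

Lemma threshold_gamma_pos : 0 < gamma.
Proof.
  rewrite <- threshold. apply Rmult_lt_0_compat; auto. apply beta_pos. unfold inS; lra.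
Qed.

Lemma rho_unit_interval x : xbar <= x -> x + ybar <= 1 -> 0 <= rho gamma beta x ybar <= 1.
Proof.
  intros Hx Hxy. unfold rho. assert (Hg := gamma_le_x_beta x Hx Hxy).
  assert (H0 := threshold_gamma_pos).
  assert (0 < gamma / (x * beta x ybar) <= 1); [|lra].
  split; [apply Rdiv_lt_0_compat; lra|].
  apply Rmult_le_reg_r with (x * beta x ybar); [lra|].
  unfold Rdiv. rewrite Rmult_assoc, Rinv_l by lra. lra.
Qed.

Let vx := sir_x beta (fun _ => 1).
Let vy := sir_y gamma beta (fun _ => 1).

(* At a first contact with [y = ybar], [y] has a left maximum although [y' < 0] there. *)
Lemma sir_y_lt_before_crossing (x y : R -> R) l a T0 :
  solves vx vy l a T0 x y -> (forall t, a <= t <= T0 -> inS (x t) (y t)) -> y a < ybar ->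
  (forall t, a <= t < T0 -> y t = ybar -> x t < xbar) ->
  forall t, a <= t < T0 -> y t < ybar.
Proof.
  intros [Hc Hd] HS Ha Hcross t1 Ht1.
  destruct (Rlt_dec (y t1) ybar) as [|Hge]; auto. exfalso.
  destruct (first_time_ge y a t1 ybar) as [m [Hm [Hym Hbefore]]]; try lra.
  { intros t Ht. apply Hc; lra. }
  assert (Ham : a < m) by (destruct (Req_dec a m) as [<-|]; lra).
  assert (Hyeq : y m = ybar).
  { enough (y m <= ybar) by lra.
    apply (continuity_pt_le_left y a); auto; [apply Hc; lra|].
    intros s Hs. left; apply Hbefore, Hs. }
  assert (Hxm : x m < xbar) by (apply Hcross; [lra | exact Hyeq]).
  destruct (Hc m ltac:(lra)) as [Cx Cy].
  assert (HSm := HS m ltac:(lra)).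
  assert (Hq : 0 <= vy m (x m) (y m)).
  { apply (left_max_derive_ge0 y (fun s => vy s (x s) (y s)) l a m); auto.
    - intros t Ht. apply Hc; lra.
    - apply (sir_continuity beta U); auto. apply continuity_pt_const. intros ? ?; reflexivity.
    - intros t Ht Hn. apply Hd; auto; lra.
    - intros s Hs. rewrite Hyeq. destruct (Req_dec s m) as [->|]; [lra|].
      left; apply Hbefore; lra. }
  unfold vy, sir_y in Hq. rewrite Hyeq in Hq.
  assert (H := infection_lt_threshold (x m) ltac:(unfold inS in HSm; lra)). lra.
Qed.

Lemma sir_x_nonincreasing (x y : R -> R) l a b : a <= b ->
  solves vx vy l a b x y -> (forall t, a <= t <= b -> inS (x t) (y t)) -> x b <= x a.
Proof.
  intros Hab [Hc Hd] HS.
  enough (x b - x a <= 0 * (b - a)) by lra.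
  apply (piecewise_MVT_le x 0 l); auto.
  - intros t Ht. apply Hc, Ht.
  - intros t Ht Hn. eexists; split; [apply Hd; auto|].
    unfold vx, sir_x. assert (H := infection_nonneg beta beta_pos (x t) (y t) (HS t ltac:(lra))).
    lra.
Qed.

(* Where [y >= ybar] and [x <= xbar] the field points downwards, so [y] can only
   decrease after its last time below the level. *)
Lemma sir_y_le_left_of_threshold (x y : R -> R) l a b : a <= b ->
  solves vx vy l a b x y -> (forall t, a <= t <= b -> inS (x t) (y t)) ->
  (forall t, a <= t <= b -> x t <= xbar) -> y a <= ybar -> y b <= ybar.
Proof.
  intros Hab [Hc Hd] HS Hx Ha.
  destruct (last_time_le y a b ybar) as [m [Hm [Hym Habove]]]; auto.
  { intros t Ht. apply Hc, Ht. }
  enough (y b - y m <= 0 * (b - m)) by lra.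
  apply (piecewise_MVT_le y 0 l); try lra.
  - intros t Ht. apply Hc; lra.
  - intros t Ht Hn. eexists; split; [apply Hd; auto; lra|].
    unfold vy, sir_y.
    assert (H := infection_le_threshold (x t) (y t) (HS t ltac:(lra)) (Hx t ltac:(lra))
      (Rlt_le _ _ (Habove t ltac:(lra)))).
    lra.
Qed.

(* Touching the level again at [t1] would make [t1] a left maximum of [x] (if
   [x t1 = xbar]) or of [y] (otherwise), where the field has the wrong sign. *)
Lemma sir_y_lt_after_corner (x y : R -> R) l T1 t1 :
  solves vx vy l T1 t1 x y -> (forall t, T1 <= t <= t1 -> inS (x t) (y t)) ->
  x T1 = xbar -> y T1 = ybar -> T1 < t1 -> y t1 < ybar.
Proof.
  intros Hsol HS Hx1 Hy1 Ht1.
  assert (Hsub : forall s, T1 <= s <= t1 -> solves vx vy l T1 s x y)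
    by (intros s Hs; apply (solves_weaken Hsol); auto; lra).
  assert (Hxle : forall s, T1 <= s <= t1 -> x s <= xbar).
  { intros s Hs. rewrite <- Hx1. apply (sir_x_nonincreasing x y l); [lra | auto |].
    intros t Ht. apply HS; lra. }
  assert (Hyle : forall s, T1 <= s <= t1 -> y s <= ybar).
  { intros s Hs. apply (sir_y_le_left_of_threshold x y l T1); [lra | auto | | | lra];
      intros t Ht; [apply HS | apply Hxle]; lra. }
  destruct (Rlt_dec (y t1) ybar) as [|Hge]; auto. exfalso.
  assert (Hyeq : y t1 = ybar) by (assert (H := Hyle t1 ltac:(lra)); lra).
  destruct Hsol as [Hc Hd].
  destruct (Hc t1 ltac:(lra)) as [Cx Cy].
  assert (HSt := HS t1 ltac:(lra)).
  assert (Hcont := sir_continuity beta U S_in_U beta_C1 gamma (fun _ => 1) x y t1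
    (continuity_pt_const (fun _ => 1) t1 (fun _ _ => eq_refl)) Cx Cy HSt).
  destruct (Req_dec (x t1) xbar) as [Hxeq|Hxne].
  - assert (Hq : 0 <= vx t1 (x t1) (y t1)).
    { apply (left_max_derive_ge0 x (fun s => vx s (x s) (y s)) l T1 t1); auto; try apply Hcont.
      - intros t Ht. apply Hc; lra.
      - intros t Ht Hn. apply Hd; auto.
      - intros s Hs. rewrite Hxeq. apply Hxle, Hs. }
    unfold vx, sir_x, infection in Hq. rewrite Hxeq, Hyeq in Hq.
    assert (0 < beta xbar ybar * xbar * ybar).
    { assert (H := beta_pos xbar ybar ltac:(unfold inS; lra)).
      apply Rmult_lt_0_compat; [apply Rmult_lt_0_compat|]; lra. }
    lra.
  - assert (Hq : 0 <= vy t1 (x t1) (y t1)).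
    { apply (left_max_derive_ge0 y (fun s => vy s (x s) (y s)) l T1 t1); auto; try apply Hcont.
      - intros t Ht. apply Hc; lra.
      - intros t Ht Hn. apply Hd; auto.
      - intros s Hs. rewrite Hyeq. apply Hyle, Hs. }
    unfold vy, sir_y in Hq. rewrite Hyeq in Hq.
    assert (Hx : 0 <= x t1 < xbar) by (assert (H := Hxle t1 ltac:(lra)); unfold inS in HSt; lra).
    assert (H := infection_lt_threshold (x t1) Hx). lra.
Qed.

End Threshold.

(** * The optimal control *)

Lemma is_solution_solves gamma beta u x y x0 y0 : 0 < gamma ->
  is_solution gamma beta u x y x0 y0 ->
  exists l, forall b, solves (sir_x beta (fun t => 1 - u t)) (sir_y gamma beta (fun t => 1 - u t))
    l 0 b (clamp0 x) (clamp0 y).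
Proof.
  intros Hg [Hx0 [Hy0 [_ [Hlx [Hly [Hc [l Hd]]]]]]].
  exists l. intros b. split.
  - intros t _. split; apply clamp0_continuity; try (intros s Hs; apply Hc, Hs).
    + rewrite Hx0; exact Hlx.
    + rewrite Hy0; exact Hly.
  - intros t Ht Hn. destruct (Hd t ltac:(lra) Hn) as [H1 H2].
    unfold sir_x, sir_y, infection. rewrite !clamp0_eq by lra.
    split; apply clamp0_derive; try lra.
    + replace (- (1 - u t) * (beta (x t) (y t) * x t * y t))
        with (- (1 - u t) * gamma * Rrep gamma beta (x t) (y t) * y t)
        by (unfold Rrep; field; lra). exact H1.
    + replace ((1 - u t) * (beta (x t) (y t) * x t * y t) - gamma * y t)
        with (gamma * ((1 - u t) * Rrep gamma beta (x t) (y t) - 1) * y t)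
        by (unfold Rrep; field; lra). exact H2.
Qed.


Lemma is_flow_solves gamma beta phi x0 y0 : 0 < gamma -> is_flow gamma beta phi -> inS x0 y0 ->
  exists l, forall b, solves (sir_x beta (fun _ => 1)) (sir_y gamma beta (fun _ => 1)) l 0 b
    (clamp0 (fun t => fst (phi t (x0, y0)))) (clamp0 (fun t => snd (phi t (x0, y0)))).
Proof.
  intros Hg Hphi HS. destruct (is_solution_solves _ _ _ _ _ _ _ Hg (Hphi x0 y0 HS)) as [l Hl].
  exists l. intros b. apply (solves_weaken (Hl b)); auto; try lra.
  intros t p q _. unfold sir_x, sir_y. split; f_equal; ring.
Qed.

Lemma is_solution_clamp0 gamma beta u x y x0 y0 : is_solution gamma beta u x y x0 y0 ->
  clamp0 x 0 = x0 /\ clamp0 y 0 = y0 /\ forall t, 0 <= t -> inS (clamp0 x t) (clamp0 y t).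
Proof.
  intros [Hx0 [Hy0 [HS _]]]. rewrite !clamp0_eq by lra.
  split; [exact Hx0 | split; [exact Hy0|]]. intros t Ht. rewrite !clamp0_eq by exact Ht. auto.
Qed.

Section Optimal_control.

Variables (gamma : R) (beta : R -> R -> R) (U : R * R -> Prop).
Hypotheses (U_open : open U) (S_in_U : forall x y, inS x y -> U (x, y))
  (beta_C1 : C1_on U beta) (beta_A1 : assumption1 beta)
  (beta_pos : forall x y, inS x y -> 0 < beta x y).
Variables (xbar ybar : R).
Hypotheses (xbar_pos : 0 < xbar) (ybar_pos : 0 < ybar) (xbar_ybar_S : xbar + ybar <= 1)
  (threshold : xbar * beta xbar ybar = gamma).
Variables (T0 h0 : R).
Hypotheses (T0_nonneg : 0 <= T0) (h0_gt : xbar < h0) (h0_S : h0 + ybar <= 1).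

Let T1 := Tone gamma xbar ybar T0 h0.
Let u := ustar gamma beta xbar ybar T0 h0.
Let X := xtilde gamma ybar T0 h0.
Let gamma_pos : 0 < gamma :=
  threshold_gamma_pos gamma beta beta_pos xbar ybar xbar_pos ybar_pos xbar_ybar_S threshold.

Lemma T0_lt_T1 : T0 < T1.
Proof.
  unfold T1, Tone. enough (0 < (h0 - xbar) / (gamma * ybar)) by lra.
  apply Rdiv_lt_0_compat; [lra | apply Rmult_lt_0_compat; lra].
Qed.

Lemma ustar_before t : t < T0 -> u t = 0.
Proof. intros Ht. unfold u, ustar. destruct (Rlt_dec t T0); [reflexivity | lra]. Qed.

Lemma ustar_after t : T1 < t -> u t = 0.
Proof.
  intros Ht. unfold T1 in Ht. unfold u, ustar. destruct (Rlt_dec t T0); [reflexivity|].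
  destruct (Rlt_dec (Tone gamma xbar ybar T0 h0) t); [reflexivity | lra].
Qed.

Lemma ustar_plateau t : T0 <= t <= T1 -> u t = rho gamma beta (X t) ybar.
Proof.
  intros Ht. unfold T1 in Ht. unfold u, ustar. destruct (Rlt_dec t T0); [lra|].
  destruct (Rlt_dec (Tone gamma xbar ybar T0 h0) t); [lra | reflexivity].
Qed.

Lemma xtilde_range t : T0 <= t <= T1 -> xbar <= X t <= h0.
Proof.
  intros Ht. unfold X, xtilde. unfold T1, Tone in Ht.
  assert (gamma * ybar * (t - T0) <= h0 - xbar).
  { apply Rle_trans with (gamma * ybar * ((h0 - xbar) / (gamma * ybar))).
    - apply Rmult_le_compat_l; [apply Rmult_le_pos|]; lra.
    - right. field. split; lra. }
  assert (0 <= gamma * ybar * (t - T0)) by (apply Rmult_le_pos; [apply Rmult_le_pos|]; lra).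
  lra.
Qed.

Lemma ustar_plateau_range t : T0 <= t <= T1 -> 0 <= u t <= 1.
Proof.
  intros Ht. rewrite ustar_plateau by exact Ht. destruct (xtilde_range t Ht).
  apply (rho_unit_interval gamma beta U S_in_U beta_C1 beta_A1 beta_pos xbar ybar); auto; lra.
Qed.

Lemma ustar_integral :
  is_RInt_gen u (at_point 0) (Rbar_locally p_infty)
    (/ (gamma * ybar) * RInt (fun x => rho gamma beta x ybar) xbar h0).
Proof.
  assert (HT := T0_lt_T1).
  apply (is_RInt_gen_supported u (fun t => rho gamma beta (X t) ybar) T0 T1); try lra.
  - exact ustar_before.
  - exact ustar_after.
  - intros t Ht. apply ustar_plateau. lra.
  - unfold X, xtilde.
    apply (is_RInt_ext (fun t => (fun x => rho gamma beta x ybar)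
                                   (h0 - gamma * ybar * (t - T0)))).
    { intros t _. simpl. f_equal. ring. }
    apply is_RInt_affine_descent; [apply Rmult_lt_0_compat; lra|].
    apply (ex_RInt_continuous (V := R_CompleteNormedModule)). intros z Hz.
    rewrite Rmin_left, Rmax_right in Hz by lra.
    apply continuity_pt_filterlim, (rho_continuity beta U); auto; [unfold inS|]; lra.
Qed.

Variables (x y px py : R -> R) (lx lp : list R).
Hypotheses
  (ctrl_solves : forall b, solves (sir_x beta (fun t => 1 - u t))
                   (sir_y gamma beta (fun t => 1 - u t)) lx 0 b x y)
  (flow_solves : forall b, solves (sir_x beta (fun _ => 1))
                   (sir_y gamma beta (fun _ => 1)) lp 0 b px py)
  (ctrl_S : forall t, 0 <= t -> inS (x t) (y t))
  (start_x : x 0 = px 0) (start_y : y 0 = py 0)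
  (flow_T0 : px T0 = h0 /\ py T0 = ybar)
  (flow_below : forall t, 0 <= t < T0 -> py t < ybar).

Lemma ctrl_follows_flow t : 0 <= t <= T0 -> x t = px t /\ y t = py t.
Proof.
  apply (solves_unique (sir_x beta (fun _ => 1)) (sir_y gamma beta (fun _ => 1))
           (lx ++ lp) 0 T0 x y px py) with U; auto.
  - apply (solves_weaken (ctrl_solves T0)); try lra; [intros; apply in_or_app; auto|].
    intros t' p q Ht'. unfold sir_x, sir_y. rewrite ustar_before by lra.
    split; f_equal; ring.
  - apply (solves_weaken (flow_solves T0)); try lra; [intros; apply in_or_app; auto|].
    auto.
  - apply (sir_lipschitz_field beta U); auto. intros. rewrite Rabs_R1; lra.
  - intros s Hs. apply S_in_U, ctrl_S; lra.
Qed.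

Lemma ctrl_plateau t : T0 <= t <= T1 -> x t = X t /\ y t = ybar.
Proof.
  assert (HT := T0_lt_T1).
  destruct (ctrl_follows_flow T0 ltac:(lra)) as [Ex Ey].
  apply (solves_unique (sir_x beta (fun t => 1 - u t)) (sir_y gamma beta (fun t => 1 - u t))
           lx T0 T1 x y X (fun _ => ybar)) with U; auto.
  - apply (solves_weaken (ctrl_solves T1)); auto; lra.
  - apply plateau_solves. intros s Hs. rewrite ustar_plateau by lra.
    destruct (xtilde_range s ltac:(lra)).
    change (h0 - gamma * (s - T0) * ybar) with (X s).
    apply one_minus_rho_infection; [lra | apply Rgt_not_eq, beta_pos; unfold inS; lra].
  - apply (sir_lipschitz_field beta U); auto. intros s Hs.
    destruct (ustar_plateau_range s ltac:(lra)). rewrite Rabs_pos_eq; lra.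
  - intros s Hs. apply S_in_U, ctrl_S; lra.
  - unfold X, xtilde. rewrite Ex, (proj1 flow_T0). ring.
  - rewrite Ey. apply flow_T0.
Qed.

Lemma ctrl_below_after t : T1 < t -> y t < ybar.
Proof.
  intros Ht. assert (HT := T0_lt_T1).
  destruct (ctrl_plateau T1 ltac:(lra)) as [Ex Ey].
  apply (sir_y_lt_after_corner gamma beta U S_in_U beta_C1 beta_A1 beta_pos xbar ybar
    xbar_pos ybar_pos xbar_ybar_S threshold x y lx T1); auto.
  - apply (solves_weaken (ctrl_solves t)); auto; try lra.
    intros s p q Hs. unfold sir_x, sir_y. rewrite ustar_after by lra.
    split; f_equal; ring.
  - intros s Hs. apply ctrl_S; lra.
  - rewrite Ex. unfold X, xtilde, T1, Tone. field. split; lra.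
Qed.

Lemma ctrl_below_before t : 0 <= t < T0 -> y t < ybar.
Proof.
  intros Ht. rewrite (proj2 (ctrl_follows_flow t ltac:(lra))). apply flow_below, Ht.
Qed.

Lemma ctrl_feasible t : 0 <= t -> y t <= ybar.
Proof.
  intros Ht. destruct (Rlt_dec t T0) as [H0|H0]; [left; apply ctrl_below_before; lra|].
  destruct (Rlt_dec T1 t) as [H1|H1]; [left; apply ctrl_below_after, H1|].
  right. apply ctrl_plateau. lra.
Qed.

Lemma ustar_feedback t : 0 <= t -> u t = mu gamma beta ybar (x t) (y t).
Proof.
  intros Ht. unfold mu.
  destruct (Rlt_dec t T0) as [H0|H0].
  - rewrite ustar_before by exact H0.
    destruct (Rlt_dec (y t) ybar) as [|Hn]; [reflexivity|].
    exfalso; apply Hn, ctrl_below_before; lra.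
  - destruct (Rlt_dec T1 t) as [H1|H1].
    + rewrite ustar_after by exact H1.
      destruct (Rlt_dec (y t) ybar) as [|Hn]; [reflexivity|].
      exfalso; apply Hn, ctrl_below_after, H1.
    + destruct (ctrl_plateau t ltac:(lra)) as [Ex Ey]. rewrite Ex, Ey.
      destruct (Rlt_dec ybar ybar) as [|_]; [lra|].
      unfold posp. rewrite Rmax_left; [apply ustar_plateau; lra|].
      rewrite <- ustar_plateau by lra. apply ustar_plateau_range. lra.
Qed.

Lemma ustar_properties :
  (forall t, T0 < t < T1 -> x t = X t /\ y t = ybar) /\
  (forall t, 0 <= t -> u t = mu gamma beta ybar (x t) (y t)) /\
  (forall t, 0 <= t -> y t <= ybar) /\
  is_RInt_gen u (at_point 0) (Rbar_locally p_infty)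
    (/ (gamma * ybar) * RInt (fun x => rho gamma beta x ybar) xbar h0).
Proof.
  split; [|split; [exact ustar_feedback | split; [exact ctrl_feasible | exact ustar_integral]]].
  intros t Ht. apply ctrl_plateau. lra.
Qed.

End Optimal_control.

Lemma Rrep_eq_1_threshold gamma beta x y : 0 < gamma -> Rrep gamma beta x y = 1 ->
  x * beta x y = gamma.
Proof. unfold Rrep. intros Hg H. rewrite <- (Rmult_1_r gamma), <- H. field. lra. Qed.

Lemma flow_avoids_corner phi xbar ybar yhat lam x0 y0 :
  (forall p, closure2 (Gminus phi xbar ybar) p <-> exists y, yhat <= y <= ybar /\ p = (lam y, y)) ->
  inS x0 y0 -> lam y0 < x0 -> forall t, 0 <= t -> phi t (x0, y0) <> (xbar, ybar).
Proof.
  intros Hclos HS Hlam t Ht Hphi.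
  assert (Hcl : closure2 (Gminus phi xbar ybar) (x0, y0)).
  { intros eps Heps. exists (x0, y0). split; [split; [exact HS | exists t; auto]|].
    simpl. rewrite !Rminus_diag, Rabs_R0. split; exact Heps. }
  destruct (proj1 (Hclos _) Hcl) as [y [_ E]]. injection E as Ex Ey. subst. lra.
Qed.

Lemma flow_below_before_exit gamma beta (U : R * R -> Prop) xbar ybar phi yhat lam x0 y0 T0 :
  0 < gamma -> (forall x y, inS x y -> U (x, y)) -> C1_on U beta -> assumption1 beta ->
  0 < ybar -> xbar + ybar <= 1 -> xbar * beta xbar ybar = gamma -> is_flow gamma beta phi ->
  (forall p, closure2 (Gminus phi xbar ybar) p <-> exists y, yhat <= y <= ybar /\ p = (lam y, y)) ->
  lam ybar = xbar -> inDplus ybar yhat lam x0 y0 ->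
  (forall t, 0 <= t < T0 -> ~ inJ xbar ybar (phi t (x0, y0))) ->
  forall t, 0 <= t < T0 -> snd (phi t (x0, y0)) < ybar.
Proof.
  intros Hg S_U beta_C1 hA1 Hybar Hxy threshold hphi hclos hlam [HS0 [_ [[_ Hy0] Hlam0]]] Hexit t Ht.
  destruct (is_flow_solves gamma beta phi x0 y0 Hg hphi HS0) as [lp Hflow].
  destruct (is_solution_clamp0 _ _ _ _ _ _ _ (hphi x0 y0 HS0)) as [Hpx0 [Hpy0 HpS]].
  set (px := clamp0 (fun t => fst (phi t (x0, y0)))) in *.
  set (py := clamp0 (fun t => snd (phi t (x0, y0)))) in *.
  assert (Hcorner := flow_avoids_corner phi xbar ybar yhat lam x0 y0 hclos HS0 Hlam0).
  assert (Hstart : y0 < ybar).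
  { destruct Hy0 as [|Hy0]; auto. exfalso. subst y0.
    apply (Hexit 0); [lra|]. destruct (hphi x0 ybar HS0) as [E1 [E2 _]].
    unfold inJ. rewrite (surjective_pairing (phi 0 (x0, ybar))), E1, E2. simpl.
    unfold inS in HS0. repeat split; lra. }
  replace (snd (phi t (x0, y0))) with (py t) by (apply clamp0_eq; lra).
  apply (sir_y_lt_before_crossing gamma beta U S_U beta_C1 hA1 xbar ybar Hybar Hxy threshold
    px py lp 0 T0); auto; try lra; [intros s Hs; apply HpS; lra|].
  intros s Hs Hys. assert (HSs := HpS s ltac:(lra)). unfold px, py in *.
  rewrite !clamp0_eq in * by lra.
  assert (Hne : fst (phi s (x0, y0)) <> xbar).
  { intros Hxs. apply (Hcorner s ltac:(lra)).
    rewrite (surjective_pairing (phi s (x0, y0))), Hxs, Hys. reflexivity. }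
  assert (~ (xbar < fst (phi s (x0, y0)))).
  { intros Hgt. apply (Hexit s Hs). unfold inS in HSs. repeat split; auto; lra. }
  lra.
Qed.

Theorem proposition3
  (gamma : R) (beta : R -> R -> R)
  (hgamma : 0 < gamma)
  (hC2 : C2_on_S beta)
  (hbeta_pos : forall x y, inS x y -> 0 < beta x y)
  (hA1 : assumption1 beta)
  (hbeta10 : beta 1 0 > gamma)
  (ytil : R) (hytil : 0 < ytil < 1)
  (hRytil : Rrep gamma beta (1 - ytil) ytil = 1)
  (xbar ybar : R) (hybar : 0 < ybar < ytil)
  (hxbarS : inS xbar ybar) (hRxbar : Rrep gamma beta xbar ybar = 1)
  (phi : R -> R * R -> R * R) (hphi : is_flow gamma beta phi)
  (yhat : R) (lam : R -> R)
  (hyhat : 0 <= yhat <= ybar)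
  (hlam_bar : lam ybar = xbar)
  (hlam_range : forall y, yhat <= y <= ybar -> xbar <= lam y <= 1)
  (hlam_decr : forall y1 y2, yhat <= y1 -> y1 < y2 -> y2 <= ybar -> lam y2 < lam y1)
  (hlam_clos : forall p, closure2 (Gminus phi xbar ybar) p <->
                 exists y, yhat <= y <= ybar /\ p = (lam y, y))
  (x0 y0 : R) (hx0y0 : inDplus ybar yhat lam x0 y0)
  (T0 : R) (hT0pos : 0 <= T0)
  (hT0J : inJ xbar ybar (phi T0 (x0, y0)))
  (hT0first : forall t, 0 <= t < T0 -> ~ inJ xbar ybar (phi t (x0, y0)))
  (xs ys : R -> R)
  (hsol : is_solution gamma beta
            (ustar gamma beta xbar ybar T0 (fst (phi T0 (x0, y0)))) xs ys x0 y0) :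
  let h0 := fst (phi T0 (x0, y0)) in
  let T1 := Tone gamma xbar ybar T0 h0 in
  let u := ustar gamma beta xbar ybar T0 h0 in
  (forall t, T0 < t < T1 -> xs t = h0 - gamma * (t - T0) * ybar /\ ys t = ybar) /\
  (forall t, 0 <= t -> u t = mu gamma beta ybar (xs t) (ys t)) /\
  (forall t, 0 <= t -> ys t <= ybar) /\
  is_RInt_gen u (at_point 0) (Rbar_locally p_infty)
    (/ (gamma * ybar) * RInt (fun x => rho gamma beta x ybar) xbar h0).
Proof.
  intros h0 T1 u.
  destruct hC2 as [U [U_open [S_in_U [beta_C1 _]]]].
  assert (threshold := Rrep_eq_1_threshold gamma beta xbar ybar hgamma hRxbar).
  assert (xbar_pos : 0 < xbar).
  { destruct hxbarS as [[Hx|<-] _]; auto. rewrite Rmult_0_l in threshold. lra. }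
  assert (Hxy : xbar + ybar <= 1) by (unfold inS in hxbarS; lra).
  assert (HS0 := proj1 hx0y0).
  destruct hT0J as [HSJ [HyJ HxJ]]. fold h0 in HSJ, HxJ.
  destruct (is_flow_solves gamma beta phi x0 y0 hgamma hphi HS0) as [lp Hflow].
  destruct (is_solution_solves _ _ _ _ _ _ _ hgamma hsol) as [lx Hctrl].
  destruct (is_solution_clamp0 _ _ _ _ _ _ _ (hphi x0 y0 HS0)) as [Hpx0 [Hpy0 _]].
  destruct (is_solution_clamp0 _ _ _ _ _ _ _ hsol) as [Hx0 [Hy0 HS]].
  destruct (ustar_properties gamma beta U U_open S_in_U beta_C1 hA1 hbeta_pos xbar ybar xbar_pos
    (proj1 hybar) Hxy threshold T0 h0 hT0pos (proj1 HxJ) ltac:(unfold inS in HSJ; lra)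
    (clamp0 xs) (clamp0 ys) _ _ lx lp Hctrl Hflow HS (eq_trans Hx0 (eq_sym Hpx0))
    (eq_trans Hy0 (eq_sym Hpy0))) as [Hi [Hii [Hiii Hiv]]].
  - rewrite !clamp0_eq by lra. auto.
  - intros t Ht. rewrite clamp0_eq by lra.
    apply (flow_below_before_exit gamma beta U xbar ybar phi yhat lam x0 y0 T0); auto; lra.
  - split; [|split; [|split; [|exact Hiv]]]; intros t Ht.
    + rewrite <- (clamp0_eq xs t), <- (clamp0_eq ys t) by lra. apply Hi, Ht.
    + rewrite <- (clamp0_eq xs t), <- (clamp0_eq ys t) by exact Ht. apply Hii, Ht.
    + rewrite <- (clamp0_eq ys t) by exact Ht. apply Hiii, Ht.
Qed.
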